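(* For all integers $n\geq 1$ and all real $x\in(0,2\pi/3)$, $$\sum_{k=1}^n (n-k+1)(n-k+2)\,k\sin(kx)>\frac{2}{9}\sin(x)\bigl(1+2\cos(x)\bigr)^2,$$ and the constant $2/9$ is best possible: the inequality $\sum_{k=1}^n (n-k+1)(n-k+2)k\sin(kx)>\lambda\sin(x)(1+2\cos x)^2$ for all $n\ge1$, $x\in(0,2\pi/3)$ fails for every $\lambda>2/9$. *)

From Stdlib Require Import Reals Lra.
Open Scope R_scope.

Definition S (n : nat) (x : R) : R :=
  sum_f 1 n (fun k => (INR n - INR k + 1) * (INR n - INR k + 2) * INR k * sin (INR k * x)).

(* Put x = 2t with 0 < t < pi/3, s = sin t, c = cos t.  Summing three times
   by parts gives the closed form  8 s^4 S n (2t) = F n t  with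
     F n t = (2n+3) s (2c + cos((2n+3)t)) - 3c sin((2n+3)t),
   and the right-hand side becomes  B t = 32/9 s^5 c (4c^2 - 1)^2.  For n >= 3
   we show F > B on four regions covering (0, pi/3):
   I.   (n+1) t <= pi: F = 8 s Phi_{n+1} with Phi a sum of nonnegative terms
        whose first two already exceed B;
   II.  t <= 9/10 and III. t far from pi/3: a Cauchy-Schwarz bound on the
        oscillating part reduces F > B to positivity of an explicit [gap];
   IV.  t within 1/(2n+3) of pi/3: the half angle (n + 3/2) t is close to an
        odd multiple of pi/6, which controls the oscillating part directly.
   The cases n = 1, 2 are explicit, and n = 1 with x -> 0 shows sharpness. *)

From Stdlib Require Import Reals Lra Lia Nsatz.
Open Scope R_scope.

(* The Pythagorean identity in the product form used by [nsatz]. *)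
Lemma sin_cos_sq (t : R) : sin t * sin t + cos t * cos t = 1.
Proof. pose proof (sin2_cos2 t) as H. unfold Rsqr in H. lra. Qed.

Lemma PI_gt_3 : 3 < PI.
Proof. pose proof PI2_3_2. lra. Qed.

Lemma sin_lower (z : R) : 0 <= z -> z <= 4 -> z - z ^ 3 / 6 <= sin z.
Proof.
  intros H0 H1. destruct (pre_sin_bound z 0 H0 H1) as [H _].
  unfold sin_approx, sin_term in H. simpl in H. lra.
Qed.

Lemma sin_upper (z : R) : 0 <= z -> z <= 4 -> sin z <= z.
Proof.
  intros H0 H1. destruct (pre_sin_bound z 0 H0 H1) as [_ H].
  unfold sin_approx, sin_term in H. simpl in H.
  assert (0 <= z * z * z) by (repeat apply Rmult_le_pos; lra).
  assert (0 <= z * z * z * (20 - z * z)) by (apply Rmult_le_pos; nra).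
  lra.
Qed.

Lemma cos_lower (z : R) : -2 <= z -> z <= 2 -> 1 - z ^ 2 / 2 <= cos z.
Proof.
  intros H0 H1. destruct (pre_cos_bound z 0 H0 H1) as [H _].
  unfold cos_approx, cos_term in H. simpl in H. lra.
Qed.

Lemma cos_triple (z : R) : cos (3 * z) = 4 * (cos z * cos z * cos z) - 3 * cos z.
Proof.
  replace (3 * z) with (2 * z + z) by ring. rewrite cos_plus, sin_2a, cos_2a.
  pose proof (sin_cos_sq z). nsatz.
Qed.

Lemma three_le_INR (n : nat) : (3 <= n)%nat -> 3 <= INR n.
Proof. intros Hn. replace 3 with (INR 3) by (simpl; ring). apply le_INR. exact Hn. Qed.

(* The three nested weighted sine sums; [sum3] is [S] with the (zero)
   term k = 0 added, and each is a running sum of the previous one. *)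
Definition sum1 (n : nat) (x : R) : R :=
  sum_f_R0 (fun k => INR k * sin (INR k * x)) n.
Definition sum2 (n : nat) (x : R) : R :=
  sum_f_R0 (fun k => (INR n - INR k + 1) * INR k * sin (INR k * x)) n.
Definition sum3 (n : nat) (x : R) : R :=
  sum_f_R0 (fun k => (INR n - INR k + 1) * (INR n - INR k + 2) * INR k
                     * sin (INR k * x)) n.

Lemma S_eq_sum3 (n : nat) (x : R) : (1 <= n)%nat -> S n x = sum3 n x.
Proof.
  intros Hn. unfold S, sum3, sum_f.
  rewrite (decomp_sum _ n) by lia.
  simpl (INR 0). rewrite !Rmult_0_r, Rmult_0_l, Rplus_0_l.
  replace (pred n) with (n - 1)%nat by lia.
  apply sum_eq. intros i _. rewrite S_INR, plus_INR. simpl. reflexivity.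
Qed.

Lemma sum1_succ (n : nat) (x : R) :
  sum1 (Datatypes.S n) x = sum1 n x + INR (Datatypes.S n) * sin (INR (Datatypes.S n) * x).
Proof. reflexivity. Qed.

Lemma sum2_succ (n : nat) (x : R) :
  sum2 (Datatypes.S n) x = sum2 n x + sum1 (Datatypes.S n) x.
Proof.
  unfold sum2, sum1. rewrite !tech5, S_INR.
  replace (sum_f_R0 _ n) with
    (sum_f_R0 (fun k => (INR n - INR k + 1) * INR k * sin (INR k * x)) n +
     sum_f_R0 (fun k => INR k * sin (INR k * x)) n)
    by (rewrite <- plus_sum; apply sum_eq; intros i _; ring).
  ring.
Qed.

Lemma sum3_succ (n : nat) (x : R) :
  sum3 (Datatypes.S n) x = sum3 n x + 2 * sum2 (Datatypes.S n) x.
Proof.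
  unfold sum3, sum2. rewrite !tech5, S_INR.
  replace (sum_f_R0 _ n) with
    (sum_f_R0 (fun k => (INR n - INR k + 1) * (INR n - INR k + 2) * INR k
                        * sin (INR k * x)) n +
     2 * sum_f_R0 (fun k => (INR n + 1 - INR k + 1) * INR k * sin (INR k * x)) n)
    by (rewrite scal_sum, <- plus_sum; apply sum_eq; intros i _; ring).
  ring.
Qed.

(* Closed forms at x = 2t, obtained by induction from the recurrences above
   with the addition formulas; the powers of sin t clear the denominators. *)
Lemma sum1_closed (n : nat) (t : R) :
  4 * (sin t * sin t) * sum1 n (2 * t) =
  cos t * sin ((2 * INR n + 1) * t) - (2 * INR n + 1) * sin t * cos ((2 * INR n + 1) * t).
Proof.
  induction n as [|n IH].
  - unfold sum1. simpl. replace ((2 * 0 + 1) * t) with t by ring. ring.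
  - rewrite sum1_succ.
    set (A := (2 * INR n + 1) * t) in *.
    replace ((2 * INR (Datatypes.S n) + 1) * t) with (A + 2 * t)
      by (unfold A; rewrite S_INR; ring).
    replace (INR (Datatypes.S n) * (2 * t)) with (A + t)
      by (unfold A; rewrite S_INR; ring).
    rewrite S_INR, !sin_plus, !cos_plus, sin_2a, cos_2a.
    pose proof (sin_cos_sq t). nsatz.
Qed.

Lemma sum2_closed (n : nat) (t : R) :
  4 * (sin t * sin t * sin t) * sum2 n (2 * t) =
  cos t * (1 - cos ((2 * INR n + 2) * t)) - (INR n + 1) * sin t * sin ((2 * INR n + 2) * t).
Proof.
  induction n as [|n IH].
  - unfold sum2. simpl. replace ((2 * 0 + 2) * t) with (2 * t) by ring.
    rewrite sin_2a, cos_2a. pose proof (sin_cos_sq t). nsatz.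
  - rewrite sum2_succ. pose proof (sum1_closed (Datatypes.S n) t) as H1.
    set (B := (2 * INR n + 2) * t) in *.
    replace ((2 * INR (Datatypes.S n) + 2) * t) with (B + 2 * t)
      by (unfold B; rewrite S_INR; ring).
    replace ((2 * INR (Datatypes.S n) + 1) * t) with (B + t) in H1
      by (unfold B; rewrite S_INR; ring).
    rewrite S_INR in *. rewrite !sin_plus, !cos_plus, sin_2a, cos_2a in *.
    pose proof (sin_cos_sq t). nsatz.
Qed.

Definition F (n : nat) (t : R) : R :=
  (2 * INR n + 3) * sin t * (2 * cos t + cos ((2 * INR n + 3) * t))
  - 3 * cos t * sin ((2 * INR n + 3) * t).

Lemma sum3_closed (n : nat) (t : R) :
  8 * (sin t * sin t * sin t * sin t) * sum3 n (2 * t) = F n t.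
Proof.
  unfold F. induction n as [|n IH].
  - unfold sum3. simpl. replace ((2 * 0 + 3) * t) with (2 * t + t) by ring.
    rewrite sin_plus, cos_plus, sin_2a, cos_2a. pose proof (sin_cos_sq t). nsatz.
  - rewrite sum3_succ. pose proof (sum2_closed (Datatypes.S n) t) as H2.
    set (D := (2 * INR n + 3) * t) in *.
    replace ((2 * INR (Datatypes.S n) + 3) * t) with (D + 2 * t)
      by (unfold D; rewrite S_INR; ring).
    replace ((2 * INR (Datatypes.S n) + 2) * t) with (D + t) in H2
      by (unfold D; rewrite S_INR; ring).
    rewrite S_INR in *. rewrite !sin_plus, !cos_plus, sin_2a, cos_2a in *.
    pose proof (sin_cos_sq t). nsatz.
Qed.

(* The right-hand side, scaled like [F]: [B t = 8 sin^4 t * (2/9) sin(2t) (1 + 2 cos(2t))^2]. *)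
Definition B (t : R) : R := 32 / 9 * sin t ^ 5 * cos t * (4 * cos t * cos t - 1) ^ 2.

Lemma B_eq (t : R) :
  8 * (sin t * sin t * sin t * sin t) * (2 / 9 * sin (2 * t) * (1 + 2 * cos (2 * t)) ^ 2) = B t.
Proof. unfold B. rewrite sin_2a, cos_2a_cos. field. Qed.

Lemma sin_cos_range (t : R) : 0 < t < PI / 3 -> 0 < sin t /\ 1 / 2 < cos t /\ cos t < 1.
Proof.
  intros Ht. pose proof PI_gt_3.
  assert (Hs : 0 < sin t) by (apply sin_gt_0; lra).
  split; [exact Hs|]. split.
  - rewrite <- cos_PI3. apply cos_decreasing_1; lra.
  - pose proof (sin_cos_sq t). pose proof (COS_bound t). nra.
Qed.

(* A second decomposition of [F] as a sum of products, whose terms are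
   nonnegative as long as (n+1) t <= pi:  F n t = 8 sin t * Phi (n+1) t. *)
Definition h (j : nat) (t : R) : R := cos t * sin (INR j * t) - INR j * sin t * cos (INR j * t).
Definition Phi (m : nat) (t : R) : R := sum_f_R0 (fun j => sin (INR j * t) * h j t) m.

Lemma h_succ (j : nat) (t : R) :
  h (Datatypes.S j) t = cos t * h j t + INR (Datatypes.S j) * (sin t * sin t) * sin (INR j * t).
Proof.
  unfold h. rewrite S_INR.
  replace ((INR j + 1) * t) with (INR j * t + t) by ring.
  rewrite sin_plus, cos_plus. pose proof (sin_cos_sq t). nsatz.
Qed.

Lemma h_nonneg (j : nat) (t : R) :
  0 <= t -> 0 <= cos t -> (INR j - 1) * t <= PI -> 0 <= h j t.
Proof.
  revert t. induction j as [|j IH]; intros t Ht Hc Hj.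
  - unfold h. simpl. rewrite Rmult_0_l, sin_0, cos_0. lra.
  - rewrite h_succ. rewrite S_INR in Hj.
    pose proof (pos_INR j). pose proof (pos_INR (Datatypes.S j)).
    assert (Hh : 0 <= h j t) by (apply IH; nra).
    assert (Hs : 0 <= sin (INR j * t)) by (apply sin_ge_0; nra).
    assert (0 <= sin t * sin t) by apply Rle_0_sqr.
    assert (0 <= cos t * h j t) by (apply Rmult_le_pos; lra).
    assert (0 <= INR (Datatypes.S j) * (sin t * sin t) * sin (INR j * t))
      by (apply Rmult_le_pos; [apply Rmult_le_pos|]; lra).
    lra.
Qed.

Lemma Phi_closed (m : nat) (t : R) :
  8 * sin t * Phi m t =
  (2 * INR m + 1) * sin t * (2 * cos t + cos ((2 * INR m + 1) * t))
  - 3 * cos t * sin ((2 * INR m + 1) * t).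
Proof.
  induction m as [|m IH].
  - unfold Phi, h. simpl sum_f_R0. simpl INR. rewrite !Rmult_0_l, sin_0.
    replace ((2 * 0 + 1) * t) with t by ring. ring.
  - unfold Phi in *. rewrite tech5. unfold h at 2.
    set (A := INR (Datatypes.S m) * t) in *.
    replace ((2 * INR m + 1) * t) with (2 * A - t) in IH by (unfold A; rewrite S_INR; ring).
    replace ((2 * INR (Datatypes.S m) + 1) * t) with (2 * A + t) by (unfold A; rewrite S_INR; ring).
    rewrite S_INR in *. rewrite sin_plus, cos_plus, sin_minus, cos_minus, !sin_2a, !cos_2a in *.
    pose proof (sin_cos_sq t). pose proof (sin_cos_sq A). nsatz.
Qed.

Lemma F_eq_Phi (n : nat) (t : R) : F n t = 8 * sin t * Phi (Datatypes.S n) t.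
Proof.
  rewrite Phi_closed, S_INR. unfold F.
  replace (2 * (INR n + 1) + 1) with (2 * INR n + 3) by ring. reflexivity.
Qed.

Lemma Phi_two (t : R) : Phi 2 t = 4 * (sin t * sin t * sin t * sin t) * cos t.
Proof.
  unfold Phi, h. simpl sum_f_R0.
  replace (INR 0) with 0 by reflexivity. replace (INR 1) with 1 by reflexivity.
  replace (INR 2) with 2 by (simpl; ring).
  rewrite Rmult_0_l, sin_0, !Rmult_1_l, sin_2a, cos_2a.
  pose proof (sin_cos_sq t). nsatz.
Qed.

(* While m t <= pi every term of [Phi m t] is nonnegative, so the sum
   dominates its first two terms. *)
Lemma Phi_ge_Phi_two (m : nat) (t : R) :
  (2 <= m)%nat -> 0 <= t -> 0 <= cos t -> INR m * t <= PI -> Phi 2 t <= Phi m t.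
Proof.
  intros Hm Ht Hc. induction Hm as [|m Hm IH]; intros Hmt; [lra|].
  unfold Phi at 2. rewrite tech5. fold (Phi m t). rewrite S_INR in Hmt.
  pose proof (pos_INR m).
  assert (Hs : 0 <= sin (INR (Datatypes.S m) * t)) by (apply sin_ge_0; rewrite S_INR; nra).
  assert (Hh : 0 <= h (Datatypes.S m) t) by (apply h_nonneg; auto; rewrite S_INR; nra).
  assert (0 <= sin (INR (Datatypes.S m) * t) * h (Datatypes.S m) t) by (apply Rmult_le_pos; lra).
  specialize (IH ltac:(lra)). lra.
Qed.

(* Region I: (n+1) t <= pi.  Then F >= 32 sin^5 t cos t, while B <= 32 sin^5 t cos t
   up to the factor (4 cos^2 t - 1)^2 / 9 < 1. *)
Lemma F_gt_B_small_angle (n : nat) (t : R) :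
  (1 <= n)%nat -> 0 < t < PI / 3 -> INR (Datatypes.S n) * t <= PI -> F n t > B t.
Proof.
  intros Hn Ht Hnt.
  destruct (sin_cos_range t Ht) as [Hs [Hc1 Hc2]].
  pose proof (Phi_ge_Phi_two (Datatypes.S n) t ltac:(lia) ltac:(lra) ltac:(lra) Hnt) as HP.
  rewrite Phi_two in HP. rewrite F_eq_Phi. unfold B.
  set (s := sin t) in *. set (c := cos t) in *.
  assert (H8 : 8 * s * (4 * (s * s * s * s) * c) <= 8 * s * Phi (Datatypes.S n) t)
    by (apply Rmult_le_compat_l; lra).
  assert (Hw0 : 0 < 4 * c * c - 1 < 3) by nra.
  assert (Hw : (4 * c * c - 1) ^ 2 < 9) by (simpl; nra).
  assert (Hp : 0 < s * s * s * s * s * c) by (repeat apply Rmult_lt_0_compat; lra).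
  assert (32 / 9 * (s * s * s * s * s * c) * (4 * c * c - 1) ^ 2 < 32 / 9 * (s * s * s * s * s * c) * 9)
    by (apply Rmult_lt_compat_l; lra).
  simpl in *. lra.
Qed.

(* Writing F = 2N s (2c + q) - 3c p with (p, q) on the unit
   circle, the worst case of the oscillating part is -sqrt(4N^2 s^2 + 9c^2);
   hence F > B as soon as (4Nsc - B)^2 > 4N^2 s^2 + 9c^2, which follows from
   [gap N s c > 0] because B <= 9/8 s c. *)
Definition gap (N s c : R) : R :=
  4 * N * N * s * s * (4 * c * c - 1) - 9 * N * s * s * c * c - 9 * c * c.

Lemma amplitude_bound (N s c p q : R) :
  1 <= N -> 0 < s -> 0 < c -> s * s + c * c = 1 -> p * p + q * q = 1 ->
  0 < 4 * c * c - 1 -> gap N s c > 0 ->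
  2 * N * s * (2 * c + q) - 3 * c * p > 32 / 9 * s ^ 5 * c * (4 * c * c - 1) ^ 2.
Proof.
  unfold gap. intros HN Hs Hc Hsc Hpq Hw Hgap.
  set (w := 4 * c * c - 1) in *.
  set (Bv := 32 / 9 * s ^ 5 * c * w ^ 2).
  assert (Hssw : 0 <= s * s * w <= 9 / 16).
  { assert (0 <= (2 * s * s - 3 / 4) * (2 * s * s - 3 / 4)) by apply Rle_0_sqr.
    split; [apply Rmult_le_pos|unfold w]; nra. }
  assert (Hssw2 : (s * s * w) * (s * s * w) <= 81 / 256).
  { pose proof (Rmult_le_compat _ _ _ _ (proj1 Hssw) (proj1 Hssw) (proj2 Hssw) (proj2 Hssw)). lra. }
  assert (HB : Bv = 32 / 9 * (s * c) * ((s * s * w) * (s * s * w))) by (unfold Bv; ring).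
  assert (Hsc0 : 0 < s * c) by nra.
  assert (HB1 : Bv <= 9 / 8 * (s * c)) by (rewrite HB; nra).
  assert (HB0 : 0 <= Bv) by (rewrite HB; nra).
  set (K := 4 * N * s * c - Bv).
  set (X := 2 * N * s * q - 3 * c * p).
  assert (HK : 0 < K) by (unfold K; nra).
  (* Cauchy-Schwarz for the oscillating part *)
  assert (HX : X * X <= 4 * N * N * s * s + 9 * c * c).
  { assert (E : X * X + (2 * N * s * p + 3 * c * q) * (2 * N * s * p + 3 * c * q)
                = (4 * N * N * s * s + 9 * c * c) * (p * p + q * q)) by (unfold X; ring).
    rewrite Hpq in E. pose proof (Rle_0_sqr (2 * N * s * p + 3 * c * q)). unfold Rsqr in *. lra. }
  assert (HK2 : 16 * N * N * s * s * c * c - 9 * N * s * s * c * c <= K * K).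
  { assert (8 * N * s * c * Bv <= 8 * N * s * c * (9 / 8 * (s * c))) by (apply Rmult_le_compat_l; nra).
    pose proof (Rle_0_sqr Bv). unfold K, Rsqr in *. nra. }
  assert (HKX : X * X < K * K) by (unfold w in *; nra).
  assert (0 < K + X) by nra.
  unfold K, X in *. lra.
Qed.

Lemma F_gt_B_of_gap (n : nat) (t : R) :
  (3 <= n)%nat -> 0 < t < PI / 3 -> gap (INR n + 3 / 2) (sin t) (cos t) > 0 -> F n t > B t.
Proof.
  intros Hn Ht Hgap.
  destruct (sin_cos_range t Ht) as [Hs [Hc1 Hc2]].
  pose proof (three_le_INR n Hn).
  set (y := (2 * INR n + 3) * t).
  replace (F n t) with
    (2 * (INR n + 3 / 2) * sin t * (2 * cos t + cos y) - 3 * cos t * sin y)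
    by (unfold F, y; field).
  apply amplitude_bound; try lra.
  - apply sin_cos_sq.
  - pose proof (sin_cos_sq y). lra.
  - nra.
Qed.

(* Region II: (n+1) t > pi and t <= 9/10, so N t >= 3 and cos t is bounded
   away from 1/2. *)
Lemma gap_pos_moderate_angle (n : nat) (t : R) :
  (3 <= n)%nat -> 0 < t -> t <= 9 / 10 -> PI < (INR n + 1) * t ->
  gap (INR n + 3 / 2) (sin t) (cos t) > 0.
Proof.
  intros Hn Ht0 Ht9 HP. unfold gap.
  pose proof (three_le_INR n Hn). pose proof PI_gt_3.
  set (N := INR n + 3 / 2). set (s := sin t). set (c := cos t).
  assert (Hs1 : t - t ^ 3 / 6 <= s) by (apply sin_lower; lra).
  assert (Hc3 : 1 - t ^ 2 / 2 <= c) by (apply cos_lower; lra).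
  simpl in Hs1, Hc3.
  assert (Hs2 : 865 / 1000 * t <= s) by nra.
  assert (HNt : 3 <= N * t) by (unfold N; nra).
  assert (HNs : 5 / 2 <= N * s).
  { assert (N * (865 / 1000 * t) <= N * s) by (apply Rmult_le_compat_l; unfold N; lra). lra. }
  assert (Hc4 : 595 / 1000 <= c) by nra.
  assert (Hcc : 354 / 1000 <= c * c) by nra.
  set (w := 4 * c * c - 1).
  assert (T1 : 0 <= N * s * s * (2 * N * w - 9 * c * c)).
  { assert (0 <= 2 * N * w - 9 * c * c) by (unfold w, N in *; nra).
    assert (0 <= N * s * s) by (unfold N in *; nra). nra. }
  assert (T2 : 0 < 2 * (N * s) * (N * s) * w - 9 * c * c).
  { assert (6 <= (N * s) * (N * s)) by nra. unfold w in *. nra. }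
  assert (E : 4 * N * N * s * s * w - 9 * N * s * s * c * c - 9 * c * c
              = N * s * s * (2 * N * w - 9 * c * c) + (2 * (N * s) * (N * s) * w - 9 * c * c)) by ring.
  unfold w in E. lra.
Qed.

(* Near t = pi/3 the factor 4 cos^2 t - 1 vanishes linearly in e = pi/3 - t. *)
Lemma four_cos_sq_sub_one (e : R) :
  4 * cos (PI / 3 - e) * cos (PI / 3 - e) - 1 = 1 - cos (2 * e) + sqrt 3 * sin (2 * e).
Proof.
  assert (E : 4 * cos (PI / 3 - e) * cos (PI / 3 - e) - 1 = 2 * cos (2 * (PI / 3 - e)) + 1)
    by (rewrite cos_2a_cos; ring).
  replace (2 * (PI / 3 - e)) with (2 * (PI / 3) - 2 * e) in E by ring.
  rewrite (cos_minus (2 * (PI / 3))), cos_2PI3, sin_2PI3 in E. lra.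
Qed.

Lemma four_cos_sq_sub_one_lower (e : R) :
  0 <= e -> e <= 434 / 1000 -> 3 * e <= 4 * cos (PI / 3 - e) * cos (PI / 3 - e) - 1.
Proof.
  intros He0 He1. rewrite four_cos_sq_sub_one.
  assert (Hsin : 2 * e - (2 * e) ^ 3 / 6 <= sin (2 * e)) by (apply sin_lower; lra).
  simpl in Hsin.
  assert (Hsin2 : 87 / 100 * (2 * e) <= sin (2 * e)) by nra.
  pose proof (COS_bound (2 * e)).
  assert (Hr : 1732 / 1000 <= sqrt 3).
  { pose proof Rlt_sqrt3_0. pose proof (sqrt_sqrt 3 ltac:(lra)). nra. }
  assert (0 <= sin (2 * e)) by lra.
  assert (1732 / 1000 * sin (2 * e) <= sqrt 3 * sin (2 * e)) by (apply Rmult_le_compat_r; lra).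
  lra.
Qed.

(* Region III: t > 9/10 but e = pi/3 - t >= 1 / (2N): then N (4c^2 - 1) >= 3/2
   and N s^2 >= 27/10, which makes the gap positive. *)
Lemma gap_pos_large_angle (n : nat) (t : R) :
  (3 <= n)%nat -> t < PI / 3 -> 9 / 10 < t ->
  1 / (2 * (INR n + 3 / 2)) <= PI / 3 - t -> gap (INR n + 3 / 2) (sin t) (cos t) > 0.
Proof.
  intros Hn Ht Ht9 He. unfold gap.
  pose proof (three_le_INR n Hn). pose proof PI_gt_3. pose proof PI_4.
  set (N := INR n + 3 / 2) in *. set (e := PI / 3 - t) in *.
  assert (Hte : t = PI / 3 - e) by (unfold e; ring).
  assert (HN0 : 0 < 2 * N) by (unfold N; lra).
  assert (HNe : 1 <= N * (2 * e)).
  { assert ((2 * N) * (1 / (2 * N)) = 1) by (field; lra).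
    assert ((2 * N) * (1 / (2 * N)) <= (2 * N) * e) by (apply Rmult_le_compat_l; lra). lra. }
  assert (Hw : 3 * e <= 4 * cos t * cos t - 1).
  { assert (0 < 1 / (2 * N)) by (apply Rdiv_lt_0_compat; lra).
    rewrite Hte. apply four_cos_sq_sub_one_lower; unfold e in *; lra. }
  assert (HNw : 3 / 2 <= N * (4 * cos t * cos t - 1)).
  { assert (N * (3 * e) <= N * (4 * cos t * cos t - 1)) by (apply Rmult_le_compat_l; unfold N; lra).
    lra. }
  assert (Hs1 : t - t ^ 3 / 6 <= sin t) by (apply sin_lower; lra).
  simpl in Hs1.
  assert (0 <= (t - 9 / 10) * (1 - (t * t + 9 / 10 * t + 81 / 100) / 6)) by (apply Rmult_le_pos; nra).
  assert (Hs2 : 7785 / 10000 <= sin t) by nra.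
  set (s := sin t) in *. set (c := cos t) in *.
  assert (Hsc := sin_cos_sq t). fold s c in Hsc.
  assert (Hcc : c * c <= 395 / 1000) by nra.
  assert (HNs2 : 27 / 10 <= N * s * s) by (unfold N in *; nra).
  assert (T : N * s * s * (24 / 10) <= N * s * s * (4 * N * (4 * c * c - 1) - 9 * c * c))
    by (apply Rmult_le_compat_l; lra).
  assert (E : 4 * N * N * s * s * (4 * c * c - 1) - 9 * N * s * s * c * c - 9 * c * c
              = N * s * s * (4 * N * (4 * c * c - 1) - 9 * c * c) - 9 * c * c) by ring.
  lra.
Qed.

(* (2n+3) pi/3 is an odd multiple of pi/3, so al = (n + 3/2) pi/3 is an odd multiple
   of pi/6: either cos al = 0 or cos^2 al = 3/4. *)
Lemma half_odd_sixth (n : nat) :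
  let al := (INR n + 3 / 2) * (PI / 3) in cos al = 0 \/ cos al * cos al = 3 / 4.
Proof.
  intros al. set (u := cos (2 * al)).
  assert (H3 : cos (3 * (2 * al)) = -1).
  { replace (3 * (2 * al)) with (PI + 2 * INR (Datatypes.S n) * PI)
      by (unfold al; rewrite S_INR; field).
    rewrite cos_period. apply cos_PI. }
  rewrite cos_triple in H3. fold u in H3.
  assert (Hu : (u + 1) * ((2 * u - 1) * (2 * u - 1)) = 0) by nra.
  assert (Hu2 : u = 2 * cos al * cos al - 1) by apply cos_2a_cos.
  destruct (Rmult_integral _ _ Hu) as [Hu1 | Hu1].
  - left. nra.
  - right. nra.
Qed.

(* Exact expansion of 2 s (2c - 1) - 6 c e in the deviations 1 - a and e - b,
   where 2s = r a - b, 2c = a + r b (subtraction formulas at pi/3 - e, with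
   a = cos e, b = sin e, r = sqrt 3); every term is O(e^2). *)
Lemma near_third_expansion (r a b e : R) : r * r = 3 ->
  (r * a - b) * ((a + r * b) - 1) - 3 * (a + r * b) * e
  = - r * (1 - a) - 3 * (e - b) + (1 - a) * e + r * (1 - a) * (1 - a)
    + 2 * (1 - a) * (e - b) - 4 * r * e * e + 5 * r * (e - b) * e - r * (e - b) * (e - b).
Proof. intros Hr. nsatz. Qed.

Lemma near_third_bounds (e : R) :
  0 < e -> e <= 1 / 9 ->
  let s := sin (PI / 3 - e) in let c := cos (PI / 3 - e) in
  4 / 5 <= s /\ 1 / 2 <= c <= 3 / 5 /\
  - 10 * e ^ 2 <= 2 * s * (2 * c - 1) - 6 * c * e /\ 0 <= 4 * c * c - 1 <= 19 / 5 * e.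
Proof.
  intros He0 He1 s c.
  set (r := sqrt 3). set (a := cos e). set (b := sin e).
  assert (Hr0 : 0 < r) by apply Rlt_sqrt3_0.
  assert (Hr2 : r * r = 3) by (apply sqrt_sqrt; lra).
  assert (Hr : 1.732 <= r <= 1.7321) by (split; nra).
  assert (Hs : s = r / 2 * a - b / 2)
    by (unfold s; rewrite sin_minus, sin_PI3, cos_PI3; unfold r, a, b; field).
  assert (Hc : c = a / 2 + r / 2 * b)
    by (unfold c; rewrite cos_minus, sin_PI3, cos_PI3; unfold r, a, b; field).
  assert (Ha : 1 - e ^ 2 / 2 <= a <= 1) by (split; [apply cos_lower | apply COS_bound]; lra).
  assert (Hb : e - e ^ 3 / 6 <= b <= e) by (split; [apply sin_lower | apply sin_upper]; lra).
  assert (He2 : e * e <= e / 9) by nra.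
  assert (He3 : e ^ 3 <= e / 81) by (simpl; nra).
  rewrite Hs, Hc. simpl in *.
  assert (Hc1 : 1 / 2 <= a / 2 + r / 2 * b) by nra.
  split; [nra|]. split; [split; nra|]. split.
  - (* expand around (a, b) = (1, e) *)
    set (al := 1 - a). set (be := e - b).
    assert (0 <= al <= e * (e * 1) / 2) by (unfold al; lra).
    assert (0 <= be <= e * (e * (e * 1)) / 6) by (unfold be; lra).
    assert (Eq : 2 * (r / 2 * a - b / 2) * (2 * (a / 2 + r / 2 * b) - 1)
                 - 6 * (a / 2 + r / 2 * b) * e
                 = - r * al - 3 * be + al * e + r * al * al + 2 * al * be
                   - 4 * r * e * e + 5 * r * be * e - r * be * be).
    { unfold al, be. rewrite <- (near_third_expansion r a b e Hr2). field. }
    rewrite Eq.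
    assert (r * al <= 1.7321 * (e * (e * 1)) / 2) by nra.
    assert (0 <= al * e) by nra. assert (0 <= r * al * al) by (apply Rmult_le_pos; nra).
    assert (0 <= al * be) by nra. assert (0 <= r * be * e) by (apply Rmult_le_pos; nra).
    assert (be <= e * e / 54) by nra.
    assert (be * be <= e * e / 54) by nra.
    assert (r * be * be <= 2 * (e * e / 54)) by nra.
    assert (r * e * e <= 1.7321 * (e * e)) by nra.
    lra.
  - split; [nra|].
    assert (2 * (a / 2 + r / 2 * b) <= 1 + r * e) by nra.
    nra.
Qed.

Lemma B_le_near_third (e : R) : 0 < e -> e <= 1 / 9 -> B (PI / 3 - e) <= 31 * e ^ 2.
Proof.
  intros He0 He1.
  destruct (near_third_bounds e He0 He1) as [Hs [[Hc1 Hc2] [_ [Hw1 Hw2]]]].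
  unfold B. set (s := sin (PI / 3 - e)) in *. set (c := cos (PI / 3 - e)) in *.
  assert (Hs1 : s <= 1) by apply SIN_bound.
  assert (H5 : s ^ 5 <= 1) by (rewrite <- (pow1 5); apply pow_incr; lra).
  assert (H50 : 0 <= s ^ 5) by (apply pow_le; lra).
  assert (Hw3 : (4 * c * c - 1) ^ 2 <= (19 / 5 * e) ^ 2) by (apply pow_incr; lra).
  assert (Hw4 : 0 <= (4 * c * c - 1) ^ 2) by (apply pow_le; lra).
  assert (H6 : s ^ 5 * c <= 3 / 5) by nra.
  assert (s ^ 5 * c * (4 * c * c - 1) ^ 2 <= 3 / 5 * (19 / 5 * e) ^ 2)
    by (apply Rmult_le_compat; nra).
  simpl in *. nra.
Qed.

Lemma F_half_angle (n : nat) (t : R) :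
  let N := INR n + 3 / 2 in
  F n t = 2 * N * sin t * (2 * cos t + 2 * cos (N * t) * cos (N * t) - 1)
          - 6 * cos t * sin (N * t) * cos (N * t).
Proof.
  intros N. unfold F. replace ((2 * INR n + 3) * t) with (2 * (N * t)) by (unfold N; field).
  rewrite cos_2a_cos, sin_2a. unfold N. field.
Qed.

(* Case cos(N pi/3) = 0: then cos^2(N t) = sin^2 th with th = N e, and the term
   4 N s sin^2 th ~ 4 N^3 s e^2 beats both the O(N e^2) loss and B = O(e^2). *)
Lemma half_angle_bound_sin (N s c e sg kp Bv : R) :
  9 / 2 <= N -> 0 < e -> N * e <= 1 / 2 -> 4 / 5 <= s <= 1 -> 1 / 2 <= c <= 3 / 5 ->
  N * e - (N * e) ^ 3 / 6 <= sg -> sg <= N * e -> 0 <= kp <= 1 ->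
  - 10 * e ^ 2 <= 2 * s * (2 * c - 1) - 6 * c * e -> Bv <= 31 * e ^ 2 ->
  2 * N * s * (2 * c + 2 * sg * sg - 1) - 6 * c * sg * kp > Bv.
Proof.
  intros HN He HNe Hs Hc Hsg1 Hsg2 Hkp HE HB.
  set (th := N * e) in *.
  assert (Hth : 0 < th) by (unfold th; nra).
  assert (Hsg3 : 23 / 24 * th <= sg) by (simpl in Hsg1; nra).
  assert (H1 : sg * kp <= th) by nra.
  assert (H2 : (23 / 24 * th) * (23 / 24 * th) <= sg * sg) by (apply Rmult_le_compat; lra).
  assert (H3 : 6 * c * (sg * kp) <= 6 * c * th) by (apply Rmult_le_compat_l; lra).
  assert (H4 : N * (2 * s * (2 * c - 1) - 6 * c * e) + 4 * N * s * ((23 / 24 * th) * (23 / 24 * th))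
               <= 2 * N * s * (2 * c + 2 * sg * sg - 1) - 6 * c * sg * kp).
  { assert (4 * N * s * ((23 / 24 * th) * (23 / 24 * th)) <= 4 * N * s * (sg * sg))
      by (apply Rmult_le_compat_l; nra).
    unfold th in *. nra. }
  assert (H5 : N * (- 10 * e ^ 2) <= N * (2 * s * (2 * c - 1) - 6 * c * e))
    by (apply Rmult_le_compat_l; lra).
  assert (H6 : 4 * N * s * ((23 / 24 * th) * (23 / 24 * th)) = (4 * 529 / 576) * N * N * N * s * (e * e))
    by (unfold th; field).
  assert (H7 : N * ((4 * 529 / 576) * (N * N * s) - 10) >= 200)
    by (assert (N * N * s >= 81 / 5) by (assert (N * N >= 81 / 4) by nra; nra); nra).
  assert (H8 : 0 < e * e) by nra.
  assert (H9 : N * ((4 * 529 / 576) * (N * N * s) - 10) * (e * e) >= 200 * (e * e))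
    by (apply Rmult_ge_compat_r; lra).
  simpl in *. nra.
Qed.

(* Case cos^2(N pi/3) = 3/4: cos^2(N t) stays >= 19/100, so the term
   4 N s cos^2(N t) dominates everything else. *)
Lemma half_angle_bound_cos (N s c e C D Bv : R) :
  9 / 2 <= N -> 0 < e -> e <= 1 / 9 -> 4 / 5 <= s <= 1 -> 1 / 2 <= c <= 3 / 5 ->
  19 / 100 <= C * C -> C * C + D * D = 1 -> Bv <= 31 * e ^ 2 ->
  2 * N * s * (2 * c + 2 * C * C - 1) - 6 * c * D * C > Bv.
Proof.
  intros HN He He1 Hs Hc HC HCD HB.
  assert (HB2 : Bv <= 31 / 81) by (simpl in HB; nra).
  set (g := Rabs C).
  assert (Hg : g * g = C * C) by (unfold g; rewrite <- Rabs_mult, Rabs_right; nra).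
  assert (Hg0 : 0 <= g) by (unfold g; apply Rabs_pos).
  assert (Hg1 : 43 / 100 <= g) by nra.
  assert (HDC : D * C <= g).
  { unfold g. destruct (Rcase_abs C); [rewrite Rabs_left by lra | rewrite Rabs_right by lra]; nra. }
  assert (H1 : 6 * c * (D * C) <= 6 * c * g) by (apply Rmult_le_compat_l; lra).
  assert (H2 : 0 <= 2 * N * s * (2 * c - 1)) by (apply Rmult_le_pos; [apply Rmult_le_pos|]; lra).
  assert (H3 : 18 / 5 * (43 / 100) <= N * s * g) by (apply Rmult_le_compat; nra).
  assert (H4 : 43 / 100 * 2 <= g * (4 * N * s * g - 6 * c)) by (apply Rmult_le_compat; lra).
  nra.
Qed.

Lemma cos_sq_shift_lower (al th : R) :
  cos al * cos al = 3 / 4 -> 0 < th <= 1 / 2 -> 19 / 100 <= cos (al - th) * cos (al - th).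
Proof.
  intros Hca Hth. rewrite cos_minus.
  pose proof (sin_cos_sq al). pose proof (sin_cos_sq th).
  assert (Hsa : sin al * sin al = 1 / 4) by lra.
  assert (Hp : - 4331 / 10000 <= cos al * sin al) by nra.
  assert (Hs1 : th - th ^ 3 / 6 <= sin th) by (apply sin_lower; lra).
  assert (Hs2 : sin th <= th) by (apply sin_upper; lra).
  assert (Hk : 1 - th ^ 2 / 2 <= cos th) by (apply cos_lower; lra).
  simpl in *.
  assert (Hks0 : 0 <= cos th * sin th) by (apply Rmult_le_pos; nra).
  assert (Hks1 : cos th * sin th <= 1 / 2)
    by (pose proof (Rle_0_sqr (cos th - sin th)); unfold Rsqr in *; nra).
  assert (- 4331 / 10000 * (cos th * sin th) <= (cos al * sin al) * (cos th * sin th))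
    by (apply Rmult_le_compat_r; lra).
  assert (0 <= sin th) by nra.
  assert (sin th * sin th <= 1 / 4) by nra.
  replace ((cos al * cos th + sin al * sin th) * (cos al * cos th + sin al * sin th)) with
    ((cos al * cos al) * (cos th * cos th) + (sin al * sin al) * (sin th * sin th)
     + 2 * (cos al * sin al) * (cos th * sin th)) by ring.
  nra.
Qed.

Lemma shift_of_cos_zero (al th : R) : cos al = 0 ->
  cos (al - th) * cos (al - th) = sin th * sin th /\
  sin (al - th) * cos (al - th) = sin th * cos th.
Proof.
  intros Hca. pose proof (sin_cos_sq al). rewrite sin_minus, cos_minus.
  split; nsatz.
Qed.

(* Region IV: e = pi/3 - t < 1 / (2N).  Here th = N e <= 1/2 is the offset of the
   half angle N t from al = N pi/3, which is an odd multiple of pi/6. *)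
Lemma F_gt_B_near_third (n : nat) (t : R) :
  (3 <= n)%nat -> 0 < t < PI / 3 -> PI / 3 - t < 1 / (2 * (INR n + 3 / 2)) -> F n t > B t.
Proof.
  intros Hn Ht He.
  pose proof (three_le_INR n Hn). pose proof PI_gt_3.
  rewrite F_half_angle. set (N := INR n + 3 / 2) in *. set (e := PI / 3 - t) in *.
  assert (He0 : 0 < e) by (unfold e; lra).
  assert (HNe : N * e <= 1 / 2).
  { assert ((2 * N) * e <= (2 * N) * (1 / (2 * N))) by (apply Rmult_le_compat_l; [unfold N; lra | lra]).
    assert ((2 * N) * (1 / (2 * N)) = 1) by (field; unfold N; lra). lra. }
  assert (He9 : e <= 1 / 9) by (unfold N in *; nra).
  assert (Hte : t = PI / 3 - e) by (unfold e; ring).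
  pose proof (B_le_near_third e He0 He9) as HB. rewrite <- Hte in HB.
  pose proof (near_third_bounds e He0 He9) as Hb. cbv zeta in Hb. rewrite <- Hte in Hb.
  destruct Hb as [Hs [Hc [HE _]]].
  assert (Hs1 : sin t <= 1) by apply SIN_bound.
  set (al := N * (PI / 3)).
  assert (HNt : N * t = al - N * e) by (unfold al; rewrite Hte; ring).
  assert (Hth : 0 < N * e) by (unfold N; nra).
  remember (N * e) as th eqn:Eth.
  rewrite HNt.
  destruct (half_odd_sixth n) as [Hca | Hca]; fold N in Hca; fold al in Hca.
  - (* cos al = 0: the half angle is th away from an odd multiple of pi/2 *)
    destruct (shift_of_cos_zero al th Hca) as [HC HD].
    replace (6 * cos t * sin (al - th) * cos (al - th))
      with (6 * cos t * (sin (al - th) * cos (al - th))) by ring.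
    replace (2 * cos (al - th) * cos (al - th)) with (2 * (cos (al - th) * cos (al - th))) by ring.
    rewrite HC, HD, <- !Rmult_assoc.
    subst th. apply half_angle_bound_sin with (e := e); try lra.
    + unfold N; lra.
    + apply sin_lower; lra.
    + apply sin_upper; lra.
    + split; [apply cos_ge_0; lra | apply COS_bound].
  -
    apply half_angle_bound_cos with (e := e); try lra.
    + unfold N; lra.
    + apply cos_sq_shift_lower; lra.
    + pose proof (sin_cos_sq (al - th)). lra.
Qed.

Lemma F_gt_B (n : nat) (t : R) : (3 <= n)%nat -> 0 < t < PI / 3 -> F n t > B t.
Proof.
  intros Hn Ht.
  destruct (Rle_lt_dec (INR (Datatypes.S n) * t) PI) as [H1|H1].
  { apply F_gt_B_small_angle; auto; lia. }
  rewrite S_INR in H1.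
  destruct (Rle_lt_dec t (9 / 10)) as [H2|H2].
  { apply F_gt_B_of_gap, gap_pos_moderate_angle; auto; lra. }
  destruct (Rle_lt_dec (1 / (2 * (INR n + 3 / 2))) (PI / 3 - t)) as [H3|H3].
  - apply F_gt_B_of_gap, gap_pos_large_angle; auto; lra.
  - apply F_gt_B_near_third; auto.
Qed.

Lemma S_one (x : R) : S 1 x = 2 * sin x.
Proof. unfold S, sum_f. simpl. replace (1 * x) with x by ring. ring. Qed.

Lemma S_two (x : R) : S 2 x = sin x * (6 + 8 * cos x).
Proof.
  unfold S, sum_f. simpl.
  replace (1 * x) with x by ring. replace ((1 + 1) * x) with (2 * x) by ring.
  rewrite sin_2a. ring.
Qed.

Lemma one_plus_two_cos_range (x : R) : 0 < x < 2 * PI / 3 -> 0 < 1 + 2 * cos x < 3.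
Proof.
  intros Hx. pose proof PI_gt_3.
  assert (Hc : -1 / 2 < cos x) by (rewrite <- cos_2PI3; apply cos_decreasing_1; lra).
  assert (0 < sin (x / 2)) by (apply sin_gt_0; lra).
  assert (Hc1 : cos x < 1).
  { replace x with (2 * (x / 2)) by field. rewrite cos_2a_sin. nra. }
  lra.
Qed.

Lemma lower_bound (n : nat) (x : R) : (1 <= n)%nat -> 0 < x < 2 * PI / 3 ->
  S n x > 2 / 9 * sin x * (1 + 2 * cos x) ^ 2.
Proof.
  intros Hn Hx. pose proof PI_gt_3.
  assert (Hsx : 0 < sin x) by (apply sin_gt_0; lra).
  pose proof (one_plus_two_cos_range x Hx) as Hw.
  destruct (Compare_dec.le_lt_dec 3 n) as [H3|H3].
  - rewrite S_eq_sum3 by lia.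
    set (t := x / 2). assert (Ht : 0 < t < PI / 3) by (unfold t; lra).
    replace x with (2 * t) by (unfold t; field).
    destruct (sin_cos_range t Ht) as [Hs _].
    pose proof (F_gt_B n t H3 Ht) as HF.
    rewrite <- sum3_closed, <- B_eq in HF.
    assert (0 < 8 * (sin t * sin t * sin t * sin t)) by (repeat apply Rmult_lt_0_compat; lra).
    apply Rmult_lt_reg_l in HF; assumption.
  - set (w := 1 + 2 * cos x) in *.
    assert (n = 1%nat \/ n = 2%nat) as [-> | ->] by lia.
    + rewrite S_one. assert (w ^ 2 < 9) by (simpl; nra). nra.
    + rewrite S_two. replace (6 + 8 * cos x) with (2 + 4 * w) by (unfold w; ring).
      assert (2 / 9 * w ^ 2 < 2 + 4 * w) by (simpl; nra). nra.
Qed.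

(* Optimality: for n = 1 and x -> 0 the ratio S / (sin x (1 + 2 cos x)^2) tends to 2/9. *)
Lemma constant_sharp (lambda : R) : lambda > 2 / 9 ->
  exists x, 0 < x < 2 * PI / 3 /\ S 1 x <= lambda * sin x * (1 + 2 * cos x) ^ 2.
Proof.
  intros Hl. pose proof PI_gt_3.
  set (d := 9 - 2 / lambda).
  assert (Hd : 0 < d).
  { assert (2 / lambda < 9) by (apply (Rmult_lt_reg_l lambda); [lra|]; field_simplify; lra).
    unfold d; lra. }
  set (x := Rmin 1 (d / 12)).
  assert (Hx0 : 0 < x) by (unfold x; apply Rmin_glb_lt; lra).
  assert (Hx1 : x <= 1) by (unfold x; apply Rmin_l).
  assert (Hx2 : x <= d / 12) by (unfold x; apply Rmin_r).
  exists x. split; [lra|]. rewrite S_one.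
  assert (Hsx : 0 < sin x) by (apply sin_gt_0; lra).
  assert (Hc : 1 - x ^ 2 / 2 <= cos x) by (apply cos_lower; lra).
  simpl in Hc.
  assert (Hq : (3 - x * x) * (3 - x * x) <= (1 + 2 * cos x) * (1 + 2 * cos x))
    by (apply Rmult_le_compat; nra).
  assert (Hw2 : 9 - d / 2 <= (1 + 2 * cos x) ^ 2) by (simpl; nra).
  assert (Hld : lambda * (9 - d / 2) = 9 * lambda / 2 + 1) by (unfold d; field; lra).
  assert (lambda * (9 - d / 2) <= lambda * (1 + 2 * cos x) ^ 2) by (apply Rmult_le_compat_l; lra).
  assert (sin x * 2 <= sin x * (lambda * (1 + 2 * cos x) ^ 2)) by (apply Rmult_le_compat_l; lra).
  lra.
Qed.

Theorem theorem5 :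
  (forall (n : nat) (x : R), (1 <= n)%nat -> 0 < x < 2 * PI / 3 ->
     S n x > 2 / 9 * sin x * (1 + 2 * cos x) ^ 2)
  /\
  (forall lambda : R, lambda > 2 / 9 ->
     ~ (forall (n : nat) (x : R), (1 <= n)%nat -> 0 < x < 2 * PI / 3 ->
          S n x > lambda * sin x * (1 + 2 * cos x) ^ 2)).
Proof.
  split.
  - exact lower_bound.
  - intros lambda Hl Hall.
    destruct (constant_sharp lambda Hl) as [x [Hx Hle]].
    specialize (Hall 1%nat x (le_n 1) Hx). lra.
Qed.
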